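(* Let $\mathcal P$ be a CPOS $2n$-gon. The following are equivalent: (i) all vertices $D(i+\tfrac12)$, $1\le i\le n$, of the central symmetry set of $\mathcal P$ coincide (the central symmetry set reduces to a point); (ii) all vertices $M_i$, $1\le i\le n$, of the area evolute of $\mathcal P$ coincide (the area evolute reduces to a point); (iii) $\mathcal P$ is symmetric with respect to some point $O$, i.e. $P_{i+n}-O=O-P_i$ for all $1\le i\le n$.
   Context: A CPOS (convex, parallel opposite sides) $2n$-gon ($n\ge2$) is a closed planar polygon $\mathcal P$ with vertices $P_1,\dots,P_{2n}$ (indices taken modulo $2n$) which bounds a convex region, has no two adjacent sides parallel, has parallel opposite sides ($P_{i+n+1}-P_{i+n}$ is parallel to $P_{i+1}-P_i$ for all $i$), and is positively oriented: $[P_{i+1}-P_i,P_{j+1}-P_j]>0$ for $1\le i<j\le n$, where $[a,b]$ is the determinant of $a,b\in\mathbb R^2$. The great diagonal $d_i$ is the line through $P_i$ and $P_{i+n}$, and $D(i+\tfrac12)$ is the intersection point of $d_i$ and $d_{i+1}$. The central symmetry set is the closed polygon with vertices $D(1+\tfrac12),\dots,D(n+\tfrac12)$. $M_i=\tfrac12(P_i+P_{i+n})$, and the area evolute is the closed polygon with vertices $M_1,\dots,M_n$. *)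

From HB Require Import structures.
From mathcomp Require Import all_boot all_order all_algebra.
Set Implicit Arguments. Unset Strict Implicit. Unset Printing Implicit Defensive.
Import Order.TTheory GRing.Theory Num.Theory.
Local Open Scope ring_scope.

Section Defs.
Variable R : realFieldType.

Definition det (a b : R * R) : R := a.1 * b.2 - a.2 * b.1.
Definition vsub (a b : R * R) : R * R := (a.1 - b.1, a.2 - b.2).

(* vertices P_0, ..., P_{2n-1}; indices taken modulo 2n
   (0-based relabelling of the paper's P_1, ..., P_{2n}) *)
Definition vtx (n : nat) (P : nat -> R * R) (k : nat) : R * R := P (k %% (2 * n))%N.
Definition edge (n : nat) (P : nat -> R * R) (i : nat) : R * R :=
  vsub (vtx n P i.+1) (vtx n P i).

Definition CPOS (n : nat) (P : nat -> R * R) : Prop :=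
  [/\ (2 <= n)%N,
      (* bounds a convex region: every vertex lies in the closed half-plane
         to the left of every (oriented) side *)
      (forall i k : nat, 0 <= det (edge n P i) (vsub (vtx n P k) (vtx n P i))),
      (forall i : nat, det (edge n P i) (edge n P i.+1) != 0),
      (forall i : nat, det (edge n P (i + n)) (edge n P i) = 0) &
      (* positively oriented *)
      (forall i j : nat, (i < j)%N -> (j < n)%N -> 0 < det (edge n P i) (edge n P j))].

Definition lineInter (A B C D : R * R) : R * R :=
  let u := vsub B A in
  let w := vsub D C in
  let t := det (vsub C A) w / det u w in
  (A.1 + t * u.1, A.2 + t * u.2).

Definition Dhalf (n : nat) (P : nat -> R * R) (i : nat) : R * R :=
  lineInter (vtx n P i) (vtx n P (i + n)) (vtx n P i.+1) (vtx n P (i.+1 + n)).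

Definition Mid (n : nat) (P : nat -> R * R) (i : nat) : R * R :=
  (((vtx n P i).1 + (vtx n P (i + n)).1) / 2,
   ((vtx n P i).2 + (vtx n P (i + n)).2) / 2).

End Defs.

(* Write d_i for the great diagonal from P_i to P_{i+n} and parametrise it as
   t |-> P_i + t (P_{i+n} - P_i).  Two facts about CPOS polygons drive the proof:
   opposite sides are antiparallel (a negative multiple of each other), and
   consequently two consecutive great diagonals are never parallel, so every
   D(i+1/2) is a genuine intersection point.
   (i) => (iii): if all D(i+1/2) equal a point O, the intercept theorem applied
   to the parallel sides P_iP_{i+1} and P_{i+n}P_{i+n+1} shows that O has the
   same parameter t on all diagonals d_0, ..., d_n; since d_n is d_0 traversed
   backwards, 1 - t = t, so O is the midpoint of every great diagonal.
   (iii) => (i): the lines through pairs of points symmetric about O meet at O.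
   (ii) <=> (iii): M_i = O says exactly that P_{i+n} is the reflection of P_i. *)
From HB Require Import structures.
From mathcomp Require Import all_boot all_order all_algebra.
From mathcomp Require Import ring lra zify.
Import Order.TTheory GRing.Theory Num.Theory.
Local Open Scope ring_scope.
Set Implicit Arguments. Unset Strict Implicit.

Section PlaneGeometry.
Variable R : realFieldType.
Implicit Types (A B C D O x y z : R * R) (mu s t : R).

Definition lineAt A B t : R * R := (A.1 + t * (vsub B A).1, A.2 + t * (vsub B A).2).

Definition scalev mu x : R * R := (mu * x.1, mu * x.2).

Definition antiparallel x y := exists2 mu : R, mu < 0 & y = scalev mu x.

(* lineInter A B C D is the point of the line AB with the parameter given by
   Cramer's rule. *)
Lemma lineInterE A B C D :
  lineInter A B C D = lineAt A B (det (vsub C A) (vsub D C) / det (vsub B A) (vsub D C)).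
Proof. by []. Qed.

Lemma lineAt_rev A B t : lineAt A B t = lineAt B A (1 - t).
Proof. by rewrite /lineAt /vsub /=; congr pair; ring. Qed.

Lemma det_scalel mu x y : det (scalev mu x) y = mu * det x y.
Proof. by rewrite /det /=; ring. Qed.

Lemma det_scaler mu x y : det x (scalev mu y) = mu * det x y.
Proof. by rewrite /det /=; ring. Qed.

(* A vector parallel to a nonzero vector x is a multiple of x; x is nonzero
   as soon as some determinant det x z does not vanish. *)
Lemma parallel_scalev x y z :
  det x z != 0 -> det x y = 0 -> exists mu, y = scalev mu x.
Proof.
case: x y z => [x1 x2] [y1 y2] [z1 z2]; rewrite /det /scalev /= => hz hy.
have [x1_0|x1_neq0] := eqVneq x1 0.
  have x2_neq0 : x2 != 0.
    by apply/eqP => x2_0; move: hz; rewrite x1_0 x2_0 !mul0r subrr eqxx.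
  have y1_0 : y1 = 0.
    by move/eqP: hy; rewrite x1_0 mul0r sub0r oppr_eq0 mulf_eq0 (negbTE x2_neq0) => /eqP.
  by exists (y2 / x2); rewrite x1_0 y1_0 mulr0; congr pair; field.
exists (y1 / x1); congr pair; first by field.
have -> : y2 = x2 * y1 / x1 by apply: (mulIf x1_neq0); rewrite mulfVK //; lra.
by field.
Qed.

Lemma antiparallel_sym x y : antiparallel x y -> antiparallel y x.
Proof.
case=> mu mu_lt0 ->; exists mu^-1; first by rewrite invr_lt0.
have mu_neq0 : mu != 0 by rewrite lt_eqF.
by case: x => x1 x2; rewrite /scalev /=; congr pair; field.
Qed.

(* Intercept theorem: when the lines AA' and BB' meet and AB is parallel to
   A'B', the meeting point has the same parameter on both lines. *)
Lemma lineAt_intercept A A' B B' t s :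
  lineAt A A' t = lineAt B B' s -> det (vsub B' A') (vsub B A) = 0 ->
  det (vsub A' A) (vsub B' B) != 0 -> s = t.
Proof.
case: A A' B B' => [a1 a2] [a1' a2'] [b1 b2] [b1' b2'].
rewrite /lineAt /det /vsub /= => -[h1 h2] hpar hD.
set E1 := a1 + t * (a1' - a1) - (b1 + s * (b1' - b1)).
set E2 := a2 + t * (a2' - a2) - (b2 + s * (b2' - b2)).
have [E1_0 E2_0] : E1 = 0 /\ E2 = 0 by rewrite /E1 /E2 h1 h2 !subrr.
have : (s - t) * ((a1' - a1) * (b2' - b2) - (a2' - a2) * (b1' - b1)) = 0.
  transitivity ((b1' - a1') * (b2 - a2) - (b2' - a2') * (b1 - a1)
      - ((b2' - b2) - (a2' - a2)) * E1 + ((b1' - b1) - (a1' - a1)) * E2).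
    by rewrite /E1 /E2; ring.
  by rewrite hpar E1_0 E2_0; ring.
by move/eqP; rewrite mulf_eq0 (negbTE hD) orbF subr_eq0 => /eqP.
Qed.

Lemma reflection_midpoint A C O :
  vsub C O = vsub O A <-> ((A.1 + C.1) / 2, (A.2 + C.2) / 2) = O.
Proof.
case: A C O => [a1 a2] [c1 c2] [o1 o2]; rewrite /vsub /=.
by split=> -[h1 h2]; congr pair; lra.
Qed.

Lemma reflection_sym A C O : vsub C O = vsub O A -> vsub A O = vsub O C.
Proof.
case: A C O => [a1 a2] [c1 c2] [o1 o2]; rewrite /vsub /=.
by case=> h1 h2; congr pair; lra.
Qed.

Lemma lineAt_midpoint A B t :
  1 - t = t -> vsub B (lineAt A B t) = vsub (lineAt A B t) A.
Proof.
move=> t_half; case: A B => [a1 a2] [b1 b2]; rewrite /lineAt /vsub /=.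
have half (x y : R) : x - (y + t * (x - y)) = y + t * (x - y) - y.
  by transitivity ((1 - t) * (x - y)); [ring | rewrite t_half; ring].
by rewrite !half.
Qed.

Lemma lineInter_reflections A B C D O :
  vsub C O = vsub O A -> vsub D O = vsub O B -> det (vsub C A) (vsub D B) != 0 ->
  lineInter A C B D = O.
Proof.
case: A B C D O => [a1 a2] [b1 b2] [c1 c2] [d1 d2] [o1 o2].
rewrite /lineInter /vsub /det /= => -[hc1 hc2] [hd1 hd2].
have -> : c1 = 2 * o1 - a1 by lra.
have -> : c2 = 2 * o2 - a2 by lra.
have -> : d1 = 2 * o1 - b1 by lra.
have -> : d2 = 2 * o2 - b2 by lra.
move=> hD; have hD' : (o1 - a1) * (b2 - a2) - (o2 - a2) * (b1 - a1) != 0.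
  by apply: contra hD => /eqP h0; apply/eqP; rewrite -(mulr0 (-4)) -h0; ring.
by congr pair; field.
Qed.

End PlaneGeometry.

Section CPOSPolygon.
Variables (R : realFieldType) (n : nat) (P : nat -> R * R).
Hypothesis hP : CPOS n P.
Local Notation v := (vtx n P).
Local Notation e := (edge n P).

Lemma vtx_nn : v (n + n) = v 0%N.
Proof. by rewrite /vtx addnn -mul2n modnn mod0n. Qed.

Lemma det_vsub_vtx2 x k : det x (vsub (v k.+2) (v k)) = det x (e k) + det x (e k.+1).
Proof. by rewrite /det /edge /vsub /=; ring. Qed.

Lemma edge_turn_pos k : 0 < det (e k) (e k.+1).
Proof.
case: hP => _ convex nonpar _ _.
have := convex k k.+2; rewrite det_vsub_vtx2.
rewrite (_ : det (e k) (e k) = 0) ?add0r; last by rewrite /det; ring.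
by rewrite le_eqVlt eq_sym (negbTE (nonpar k)).
Qed.

(* Opposite sides are not only parallel but point in opposite directions:
   the sign is forced at i = 0 by the orientation of e_0 and e_{n-1}, and then
   propagated along the polygon by the positivity of consecutive turns. *)
Lemma opposite_edges_antiparallel i : (i < n)%N -> antiparallel (e i) (e (i + n)).
Proof.
case: hP => n_ge2 _ nonpar opposite orient.
have scaled j : exists mu, e (j + n) = scalev mu (e j).
  apply: (parallel_scalev (nonpar j)); move: (opposite j); rewrite /det => h; lra.
elim: i => [|i IH] lt_i_n.
  have [mu e_n] := scaled 0%N; exists mu => //.
  have turn := edge_turn_pos n.-1; rewrite prednK ?(ltn_trans _ n_ge2) // in turn.
  have orient0 := orient 0%N n.-1 ltac:(lia) ltac:(lia).
  move: turn; rewrite (_ : e n = e (0 + n)) // e_n det_scaler.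
  have -> : det (e n.-1) (e 0%N) = - det (e 0%N) (e n.-1) by rewrite /det; ring.
  by rewrite mulrN oppr_gt0 (pmulr_llt0 _ orient0).
have [lam lam_lt0 e_in] := IH (ltnW lt_i_n).
have [mu e_i1n] := scaled i.+1; exists mu => //.
have := edge_turn_pos (i + n); rewrite -addSn e_in e_i1n det_scalel det_scaler.
by rewrite mulrA (pmulr_lgt0 _ (edge_turn_pos i)) (nmulr_rgt0 _ lam_lt0).
Qed.

(* A vertex P_j whose outgoing side is antiparallel to the side P_kP_{k+1}
   lies strictly to the left of that side: on the line it would contradict the
   convexity condition at the side P_jP_{j+1}. *)
Lemma antiparallel_vtx_left k j :
  antiparallel (e k) (e j) -> 0 < det (e k) (vsub (v j) (v k)).
Proof.
case=> mu mu_lt0 e_j; case: hP => _ convex _ _ _.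
have := convex k j; rewrite le_eqVlt => /orP[/eqP on_line|//].
have split : det (e k) (vsub (v k.+2) (v j)) = det (e k) (e k.+1) - det (e k) (vsub (v j) (v k)).
  by rewrite /det /edge /vsub /=; ring.
have := convex j k.+2; rewrite e_j det_scalel split -on_line subr0.
by rewrite (pmulr_lge0 _ (edge_turn_pos k)) leNgt mu_lt0.
Qed.

Lemma great_diagonals_turn i : (i < n)%N ->
  0 < det (vsub (v (i + n)) (v i)) (vsub (v (i.+1 + n)) (v i.+1)).
Proof.
move=> lt_i_n; have anti := opposite_edges_antiparallel lt_i_n.
have -> : det (vsub (v (i + n)) (v i)) (vsub (v (i.+1 + n)) (v i.+1)) =
    det (e i) (vsub (v (i + n)) (v i)) + det (e (i + n)) (vsub (v i) (v (i + n))).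
  by rewrite addSn /det /edge /vsub /=; ring.
by rewrite addr_gt0 // antiparallel_vtx_left //; apply: antiparallel_sym.
Qed.

Definition diag_param i : R :=
  det (vsub (v i.+1) (v i)) (vsub (v (i.+1 + n)) (v i.+1)) /
  det (vsub (v (i + n)) (v i)) (vsub (v (i.+1 + n)) (v i.+1)).

Lemma DhalfE i : Dhalf n P i = lineAt (v i) (v (i + n)) (diag_param i).
Proof. by rewrite /Dhalf lineInterE. Qed.

(* Since the sides P_iP_{i+1} and P_{i+n}P_{i+n+1} are parallel, the point
   D(i+1/2) has the same parameter on d_{i+1} as on d_i. *)
Lemma Dhalf_param_next i s : (i < n)%N ->
  Dhalf n P i = lineAt (v i.+1) (v (i.+1 + n)) s -> s = diag_param i.
Proof.
move=> lt_i_n onD; case: hP => _ _ _ opposite _.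
apply: (lineAt_intercept (A := v i) (A' := v (i + n)) (B := v i.+1)); first by rewrite -DhalfE onD.
- by have := opposite i; rewrite /edge -addSn.
- by rewrite gt_eqF // great_diagonals_turn.
Qed.

Definition point_symmetric (O : R * R) : Prop :=
  forall i : nat, (i < n)%N -> vsub (v (i + n)) O = vsub O (v i).

Section CollapsedSymmetrySet.
Hypothesis Dhalf_const :
  forall i j : nat, (i < n)%N -> (j < n)%N -> Dhalf n P i = Dhalf n P j.

Lemma diag_param_const i : (i < n)%N -> diag_param i = diag_param 0.
Proof.
elim: i => [//|i IH] lt_i1_n; rewrite -IH; last by lia.
apply: Dhalf_param_next; first by lia.
by rewrite (Dhalf_const (i := i) (j := i.+1)) // ltnW.
Qed.

(* d_n is d_0 traversed backwards, so this parameter is 1/2. *)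
Lemma diag_param_half : 1 - diag_param 0 = diag_param 0.
Proof.
have lt_pred_n : (n.-1 < n)%N by case: hP => n_ge2 *; lia.
have succ_pred_n : n.-1.+1 = n by case: hP => n_ge2 *; lia.
rewrite -[in RHS](diag_param_const lt_pred_n); apply: Dhalf_param_next => //.
rewrite succ_pred_n (Dhalf_const (j := 0%N)) ?(leq_ltn_trans _ lt_pred_n) //.
by rewrite DhalfE add0n lineAt_rev vtx_nn.
Qed.

Lemma collapsed_Dhalf_symmetric : exists O, point_symmetric O.
Proof.
exists (Dhalf n P 0) => i lt_i_n.
rewrite (Dhalf_const (i := 0%N) (j := i)) ?(leq_ltn_trans _ lt_i_n) //.
by rewrite DhalfE (diag_param_const lt_i_n); apply: lineAt_midpoint; exact: diag_param_half.
Qed.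

End CollapsedSymmetrySet.

Lemma symmetric_Dhalf O : point_symmetric O -> forall i, (i < n)%N -> Dhalf n P i = O.
Proof.
move=> symO i lt_i_n; apply: lineInter_reflections; first exact: symO.
- have [lt_i1_n|ge_i1_n] := ltnP i.+1 n; first exact: symO.
  rewrite (_ : i.+1 = n) ?vtx_nn; last by lia.
  by apply: reflection_sym; have := symO 0%N (leq_ltn_trans (leq0n i) lt_i_n).
- by rewrite gt_eqF // great_diagonals_turn.
Qed.

Lemma Mid_reflection O i : vsub (v (i + n)) O = vsub O (v i) <-> Mid n P i = O.
Proof. exact: reflection_midpoint. Qed.

Lemma symmetric_Mid O : point_symmetric O -> forall i, (i < n)%N -> Mid n P i = O.
Proof. by move=> symO i lt_i_n; apply/Mid_reflection/symO. Qed.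

End CPOSPolygon.

Theorem mainTheorem1 (R : realFieldType) (n : nat) (P : nat -> R * R)
  (hP : CPOS n P) :
  [<-> (forall i j : nat, (i < n)%N -> (j < n)%N -> Dhalf n P i = Dhalf n P j);
       (forall i j : nat, (i < n)%N -> (j < n)%N -> Mid n P i = Mid n P j);
       (exists O : R * R, forall i : nat, (i < n)%N ->
            vsub (vtx n P (i + n)) O = vsub O (vtx n P i))].
Proof.
tfae.
- (* (i) => (ii): both collapse to the centre of symmetry. *)
  move=> Dhalf_const i j lt_i_n lt_j_n.
  have [O symO] := collapsed_Dhalf_symmetric hP Dhalf_const.
  by rewrite !(symmetric_Mid symO).
- (* (ii) => (iii): the common midpoint is a centre of symmetry. *)
  move=> Mid_const; exists (Mid n P 0) => i lt_i_n.
  by apply/Mid_reflection; apply: Mid_const; lia.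
-
  by case=> O symO i j lt_i_n lt_j_n; rewrite !(symmetric_Dhalf hP symO).
Qed.
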